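(* Let $q\in K_q$ be nonzero and not a root of unity. In the free algebra $K_q\langle f_I\mid I\in[n]^d\rangle$, let $\mathfrak a$ be the two-sided ideal generated by the alternating relations $(\mathcal A_I)$ together with the Young symmetry relations $(\mathcal Y_{I,J})_{(r)}$ for all $1\le r\le d$, and let $\mathfrak a_1$ be the two-sided ideal generated by the alternating relations $(\mathcal A_I)$ together with only the Young symmetry relations with $r=1$. Then $\mathfrak a=\mathfrak a_1$; that is, in the definition of the quantum Grassmannian coordinate ring $\mathcal G_q(d,n)$ one may take only the Young symmetry relations with $r=1$.
   Context: $K_q$ is a field of characteristic $0$ with a distinguished element $q\neq 0$. $[n]=\{1,\dots,n\}$, $d<n$, and $[n]^d$ is the set of $d$-tuples of elements of $[n]$. For a tuple of distinct integers, $\ell(\cdot)$ denotes its number of inversions; for tuples $A,B$, $A|B$ is their concatenation. Alternating relations $(\mathcal A_I)$: for $I\in[n]^d$ with distinct entries, $f_I=(-q)^{-\ell(I)}f_{\sigma(I)}$ where $\sigma(I)$ is the increasing rearrangement of $I$; and $f_I=0$ if two entries of $I$ coincide. Young symmetry relations $(\mathcal Y_{I,J})_{(r)}$: for $1\le r\le d$, $I$ an increasing $(d+r)$-subset of $[n]$ and $J$ a $(d-r)$-subset of $[n]$ (as a tuple), $0=\sum_{\Lambda\subseteq I,\,|\Lambda|=r}(-q)^{-\ell(I\setminus\Lambda|\Lambda)}f_{I\setminus\Lambda}f_{\Lambda|J}$, where subsets of $I$ are listed in increasing order. $\mathcal G_q(d,n)$ is the quotient of $K_q\langle f_I\mid I\in[n]^d\rangle$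 by the ideal generated by all $(\mathcal A_I)$ and $(\mathcal Y_{I,J})_{(r)}$. *)

From HB Require Import structures.
From mathcomp Require Import all_boot all_order all_algebra.
Set Implicit Arguments. Unset Strict Implicit. Unset Printing Implicit Defensive.
Import Order.TTheory GRing.Theory Num.Theory.
Local Open Scope ring_scope.

(* An element is represented by a finite formal linear combination of words
   (a list of (coefficient, word) pairs); two representations denote the same
   element of K<X> iff they have the same coefficient on every word. *)
Section FreeAlg.
Variables (K : fieldType) (X : eqType).

Definition ncpoly := seq (K * seq X).

Definition ncoef (p : ncpoly) (w : seq X) : K :=
  \sum_(t <- p | t.2 == w) t.1.

Definition ncequiv (p p' : ncpoly) : Prop := forall w, ncoef p w = ncoef p' w.

Definition ncadd (p p' : ncpoly) : ncpoly := p ++ p'.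
Definition ncscale (c : K) (p : ncpoly) : ncpoly := [seq (c * t.1, t.2) | t <- p].
Definition ncsub (p p' : ncpoly) : ncpoly := ncadd p (ncscale (-1) p').
Definition ncmul (p p' : ncpoly) : ncpoly :=
  [seq (a.1 * b.1, a.2 ++ b.2) | a <- p, b <- p'].
Definition ncsum (ps : seq ncpoly) : ncpoly := flatten ps.
Definition ncgen (x : X) : ncpoly := [:: (1, [:: x])].

Definition inIdeal (S : ncpoly -> Prop) (p : ncpoly) : Prop :=
  exists l : seq (ncpoly * ncpoly * ncpoly),
    (forall t, t \in l -> S t.1.2) /\
    ncequiv p (ncsum [seq ncmul (ncmul t.1.1 t.1.2) t.2 | t <- l]).
End FreeAlg.

(* [n] is modelled by 'I_n (0-based, with its natural order); generators f_I,
   I in [n]^d, are indexed by d.-tuple 'I_n. *)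
Section Relations.
Variables (K : fieldType) (q : K) (n d : nat).

Definition gens := d.-tuple 'I_n.

Fixpoint ninv (s : seq 'I_n) : nat :=
  match s with
  | [::] => 0%N
  | x :: s' => (count (fun y : 'I_n => (y < x)%N) s' + ninv s')%N
  end.

(* f_s for a sequence s of length d (zero otherwise; only used at length d) *)
Definition fgen (s : seq 'I_n) : ncpoly K gens :=
  match (insub s : option gens) with
  | Some t => ncgen K t
  | None => [::]
  end.

Definition mqinv (l : nat) : K := ((- q) ^+ l)^-1.

Definition arel (I : gens) : ncpoly K gens :=
  if uniq I then
    ncsub (fgen I) (ncscale (mqinv (ninv I)) (fgen (sort (fun a b : 'I_n => (a <= b)%N) I)))
  else fgen I.

(* Subsets Lambda of I of size r are given by masks m with r true entries;
   I \ Lambda = mask (~m) I and Lambda = mask m I, both in increasing order. *)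
Definition yrel (r : nat) (I J : seq 'I_n) : ncpoly K gens :=
  ncsum [seq ncscale (mqinv (ninv (mask (map negb m) I ++ mask m I)))
                     (ncmul (fgen (mask (map negb m) I)) (fgen (mask m I ++ J)))
        | m <- [seq val m | m <- enum [pred m : (d + r).-tuple bool | count id m == r]]].

Definition yrel_ok (r : nat) (I J : seq 'I_n) : Prop :=
  [/\ (1 <= r <= d)%N, size I = (d + r)%N, sorted (fun a b : 'I_n => (a < b)%N) I,
      size J = (d - r)%N & uniq J].

Definition rels_all (p : ncpoly K gens) : Prop :=
  (exists I, p = arel I) \/ (exists r I J, yrel_ok r I J /\ p = yrel r I J).

Definition rels_one (p : ncpoly K gens) : Prop :=
  (exists I, p = arel I) \/ (exists I J, yrel_ok 1 I J /\ p = yrel 1 I J).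
End Relations.

From HB Require Import structures.
From mathcomp Require Import all_boot all_order all_algebra.
From mathcomp Require Import zify.
Set Implicit Arguments. Unset Strict Implicit. Unset Printing Implicit Defensive.
Import GRing.Theory.

(* Modulo the alternating relations, the r-th Young relation is a multiple of a
   combination of first Young relations. For an (r-1)-subset M of I, sort the second
   factor of each term of (Y_(I\M),(M|J))_(1) by (A): the term indexed by x in I\M
   becomes the sorted form of the term of (Y_I,J)_(r) indexed by L = M + {x}, up to
   the factor (-q)^(-2k), k the rank of x in L. Each r-subset L is reached once for
   every x in L, so a suitable combination of these first relations equals
   (1 + q^-2 + ... + q^-2(r-1)) (Y_I,J)_(r), and this factor is nonzero because q is
   not a root of unity. *)

Section Subsets.
Variable T : finType.
Implicit Types (s : seq T) (A L M : {set T}).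

Definition inside A s := [seq y <- s | y \in A].
Definition outside A s := [seq y <- s | y \notin A].

Definition ksubset A k L := (L \subset A) && (#|L| == k).

Lemma sorted_inside (r : rel T) A s : transitive r -> sorted r s -> sorted r (inside A s).
Proof. by move=> rt; apply: sorted_filter. Qed.

Lemma sorted_outside (r : rel T) A s : transitive r -> sorted r s -> sorted r (outside A s).
Proof. by move=> rt; apply: sorted_filter. Qed.

Lemma size_inside A s : uniq s -> A \subset [set y in s] -> size (inside A s) = #|A|.
Proof.
move=> us sub; rewrite -(card_uniqP (filter_uniq _ us)); apply: eq_card => y.
by rewrite mem_filter andb_idr // => /(subsetP sub); rewrite inE.
Qed.

Lemma size_outside A s : uniq s -> A \subset [set y in s] ->
  size (outside A s) = (size s - #|A|)%N.
Proof.
move=> us sub; rewrite -(size_inside us sub) !size_filter.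
by rewrite -(count_predC (fun y => y \in A) s) addKn.
Qed.

Lemma mem_outside A s x : (x \in outside A s) = (x \in [set y in s]) && (x \notin A).
Proof. by rewrite mem_filter inE andbC. Qed.

Lemma inside_set1 s x : uniq s -> x \in s -> inside [set x] s = [:: x].
Proof.
by move=> us xs; rewrite -(filter_pred1_uniq us xs); apply: eq_filter => y; rewrite inE.
Qed.

Lemma perm_inside_setD1 s A x : uniq s -> x \in A -> x \in s ->
  perm_eq (inside A s) (x :: inside (A :\ x) s).
Proof.
move=> us xA xs; apply: uniq_perm.
- exact: filter_uniq.
- by rewrite /= mem_filter !inE eqxx /= filter_uniq.
move=> y; rewrite inE !mem_filter !inE.
by case: (eqVneq y x) => [->|] /=; rewrite ?xA ?xs.
Qed.

Lemma perm_outside_setD1 s A x : uniq s -> x \in A -> x \in s ->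
  perm_eq (outside (A :\ x) s) (x :: outside A s).
Proof.
move=> us xA xs; apply: uniq_perm.
- exact: filter_uniq.
- by rewrite /= mem_filter xA /= filter_uniq.
move=> y; rewrite inE !mem_filter !inE.
by case: (eqVneq y x) => [->|] /=; rewrite ?xs.
Qed.

Lemma outside_set1_setD1 s A x : x \in A ->
  outside [set x] (outside (A :\ x) s) = outside A s.
Proof.
move=> xA; rewrite /outside -filter_predI; apply: eq_filter => y /=.
by rewrite !inE; case: (eqVneq y x) => [->|] //=; rewrite xA.
Qed.

Lemma map_mem_mask (m : seq bool) s : uniq s -> size m = size s ->
  map (fun y => y \in mask m s) s = m.
Proof.
elim: s m => [|x s IH] [|b m] //= /andP [xs us] [sz]; congr cons.
  case: b => /=; first by rewrite inE eqxx.
  by apply/negP => /mem_mask; rewrite (negPf xs).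
rewrite -[RHS](IH m us sz); apply/eq_in_map => y ys.
by case: b => //=; rewrite inE; case: eqP => // yx; move: xs; rewrite -yx ys.
Qed.

Lemma big_mask_ksubset (R : nmodType) N (s : N.-tuple T) k (F : seq T -> seq T -> R) :
  uniq s ->
  (\sum_(m : N.-tuple bool | count id m == k) F (mask (map negb m) s) (mask m s) =
   \sum_(L | ksubset [set y in s] k L) F (outside L s) (inside L s))%R.
Proof.
move=> us.
pose h L : N.-tuple bool := [tuple of map (fun y => y \in L) s].
rewrite (reindex_onto h (fun m => [set y in mask m s])); last first.
  move=> m _; apply: val_inj => /=; under eq_map => y do rewrite inE.
  by rewrite map_mem_mask // !size_tuple.
apply: eq_big => [L|L _]; last by rewrite /outside /inside !filter_mask -map_comp.
have -> : [set y in mask (h L) s] = [set y in s] :&: L.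
  by apply/setP => y; rewrite -filter_mask !inE mem_filter andbC.
have -> : count id (h L) = #|[set y in s] :&: L|.
  rewrite count_map -size_filter -(card_uniqP (filter_uniq _ us)).
  by apply: eq_card => y; rewrite mem_filter !inE andbC.
rewrite /ksubset; apply/andP/andP => [[/eqP c /eqP e]|[sub /eqP <-]].
  by split; rewrite -e ?subsetIl ?c.
by rewrite (setIidPr sub).
Qed.

Lemma big_ksubset1 (R : nmodType) A (F : {set T} -> R) :
  (\sum_(L | ksubset A 1 L) F L = \sum_(x in A) F [set x])%R.
Proof.
rewrite -(big_imset _ (in2W set1_inj)) /=; apply: eq_bigl => L.
apply/andP/imsetP => [[sub /cards1P [x Lx]]|[x xA ->]].
  by exists x => //; rewrite -sub1set -Lx.
by rewrite sub1set cards1.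
Qed.

(* Pairs (M, x) with x in A \ M correspond to pairs (L, x) with x in L, via L = x |: M. *)
Lemma big_ksubset_setD1 (R : nmodType) A r (U : {set T} -> T -> R) : (0 < r)%N ->
  (\sum_(M | ksubset A r.-1 M) \sum_(x | (x \in A) && (x \notin M)) U M x
   = \sum_(L | ksubset A r L) \sum_(x in L) U (L :\ x) x)%R.
Proof.
move=> r0; rewrite !pair_big_dep /=.
rewrite (reindex_onto (fun p : {set T} * T => (p.1 :\ p.2, p.2))
                      (fun p => (p.2 |: p.1, p.2))) /=; last first.
  by move=> [M x] /andP [_ /andP [_ xM]]; rewrite /= setU1K.
apply: eq_big => [[L x]|[L x] _] //=.
rewrite /ksubset xpair_eqE eqxx andbT !inE eqxx /=.
apply/idP/idP.
  case/andP => /andP [/andP [sub /eqP c] /andP [xA _]] /eqP e.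
  have xL : x \in L by rewrite -e !inE eqxx.
  rewrite xL andbT; apply/andP; split; first by rewrite -e subUset sub1set xA sub.
  by rewrite (cardsD1 x L) xL c; case: (r) r0.
case/andP => /andP [sub /eqP c] xL.
rewrite (subset_trans (subsetDl L [set x]) sub) (subsetP sub x xL) setD1K // eqxx andbT /=.
by move: c; rewrite (cardsD1 x L) xL add1n => <-; rewrite /= eqxx.
Qed.

End Subsets.

Section Inversions.
Variable n : nat.
Implicit Types (s t : seq 'I_n) (A : {set 'I_n}).

Definition ord_lt (a b : 'I_n) := (a < b)%N.
Definition ord_le (a b : 'I_n) := (a <= b)%N.

Lemma ord_lt_trans : transitive ord_lt. Proof. by move=> a b c; apply: ltn_trans. Qed.
Lemma ord_lt_irr : irreflexive ord_lt. Proof. by move=> a; apply: ltnn. Qed.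
Lemma ord_le_total : total ord_le. Proof. by move=> a b; apply: leq_total. Qed.
Lemma ord_le_trans : transitive ord_le. Proof. by move=> a b c; apply: leq_trans. Qed.
Lemma ord_le_anti : antisymmetric ord_le.
Proof. by move=> a b h; apply: val_inj; apply/eqP; rewrite eqn_leq. Qed.

Lemma sorted_ord_lt_uniq s : sorted ord_lt s -> uniq s.
Proof. exact: (sorted_uniq ord_lt_trans ord_lt_irr). Qed.

Definition ninv_cross s t : nat := \sum_(b <- t) count (fun a : 'I_n => (b < a)%N) s.

Lemma ninv_cross_consl x s t :
  ninv_cross (x :: s) t = (count (fun b : 'I_n => (b < x)%N) t + ninv_cross s t)%N.
Proof.
rewrite /ninv_cross /= big_split /=; congr (_ + _)%N.
by elim: t => [|b t IH]; rewrite ?big_nil ?big_cons //= IH.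
Qed.

Lemma ninv_cross_consr x s t :
  ninv_cross s (x :: t) = (count (fun a : 'I_n => (x < a)%N) s + ninv_cross s t)%N.
Proof. by rewrite /ninv_cross big_cons. Qed.

Lemma ninv_cross_perml s s' t : perm_eq s s' -> ninv_cross s t = ninv_cross s' t.
Proof. by move/permP=> h; apply: eq_bigr => b _; rewrite h. Qed.

Lemma ninv_cross_permr s t t' : perm_eq t t' -> ninv_cross s t = ninv_cross s t'.
Proof. by move=> h; rewrite /ninv_cross (perm_big _ h). Qed.

Lemma ninv_cat s t : ninv (s ++ t) = (ninv s + ninv t + ninv_cross s t)%N.
Proof.
elim: s => [|x s IH] /=; first by rewrite /ninv_cross big1 ?addn0.
by rewrite IH count_cat ninv_cross_consl; lia.
Qed.

Lemma count_lt_head_sorted x s : sorted ord_lt (x :: s) ->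
  count (fun y : 'I_n => (y < x)%N) s = 0%N.
Proof.
move=> hs; apply/eqP; rewrite -leqn0 leqNgt -has_count; apply/hasP => -[y ys /=].
move/allP/(_ y ys): (order_path_min ord_lt_trans hs); rewrite /ord_lt => xy yx.
by have := ltn_trans xy yx; rewrite ltnn.
Qed.

Lemma ninv_sorted s : sorted ord_lt s -> ninv s = 0%N.
Proof.
elim: s => [|x s IH] //= hs.
by rewrite IH ?(path_sorted hs) // count_lt_head_sorted.
Qed.

(* In a strictly increasing sequence, the rank of the k-th entry is k. *)
Lemma big_rank_sorted (R : nmodType) (F : nat -> R) s : sorted ord_lt s ->
  (\sum_(x <- s) F (count (fun y : 'I_n => (y < x)%N) s) = \sum_(k < size s) F k)%R.
Proof.
elim: s F => [|y s IH] F hs; first by rewrite big_nil big_ord0.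
rewrite big_cons big_ord_recl /= ltnn count_lt_head_sorted //.
have hall := order_path_min ord_lt_trans hs.
rewrite -(IH (fun k => F k.+1)) ?(path_sorted hs) //; congr (_ + _)%R.
apply: eq_big_seq => x xs; by move/allP/(_ x xs): hall; rewrite /ord_lt => ->.
Qed.

(* Moving x from the left block outside (A :\ x) s to the front of the right
   block changes the number of inversions by 2a, a the rank of x in A. *)
Lemma ninv_move_to_right s A x (J : seq 'I_n) : sorted ord_lt s -> x \in A -> x \in s ->
  let a := count (fun y : 'I_n => (y < x)%N) (inside A s) in
  (ninv (outside (A :\ x) s ++ inside (A :\ x) s) + ninv (outside A s ++ [:: x])
     + ninv (x :: inside (A :\ x) s ++ J))%N =
  (ninv (outside A s ++ inside A s) + a + a + ninv (inside A s ++ J))%N.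
Proof.
move=> ss xA xs /=.
have us := sorted_ord_lt_uniq ss.
have pout := perm_outside_setD1 us xA xs; have pin := perm_inside_setD1 us xA xs.
have ea : count (fun y : 'I_n => (y < x)%N) (inside A s) =
          count (fun y : 'I_n => (y < x)%N) (inside (A :\ x) s).
  by rewrite (permP pin) /= ltnn.
rewrite !ninv_cat !(ninv_sorted (sorted_inside _ ord_lt_trans ss)).
rewrite !(ninv_sorted (sorted_outside _ ord_lt_trans ss)) count_cat.
rewrite (ninv_cross_perml _ pout) ninv_cross_consl -ea.
rewrite (ninv_cross_permr _ pin) ninv_cross_consr.
rewrite [ninv_cross (inside A s) J](ninv_cross_perml _ pin) ninv_cross_consl.
rewrite ninv_cross_consr [ninv_cross _ [::]]big_nil /=.
(* [set] identifies copies of these terms that differ only in the elaborated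
   finType instance, which [lia] would treat as distinct atoms. *)
set oA := outside A s; set iM := inside (A :\ x) s; lia.
Qed.

End Inversions.

Arguments ord_lt {n}.
Arguments ord_le {n}.
Arguments ord_lt_trans {n}.

Local Open Scope ring_scope.

(* Elements of the free algebra are compared through the linear functionals
   [nceval G], one for each weight [G] on words: they separate elements since
   [ncoef p w] is [nceval] at the indicator of [w]. *)
Section Evaluation.
Variables (K : fieldType) (X : eqType).
Implicit Types (p : ncpoly K X) (G : seq X -> K).

Definition nceval G p : K := \sum_(t <- p) t.1 * G t.2.

Lemma eq_nceval G G' p : G =1 G' -> nceval G p = nceval G' p.
Proof. by move=> e; apply: eq_bigr => t _; rewrite e. Qed.

Lemma ncoef_eval p w : ncoef p w = nceval (fun v => (v == w)%:R) p.
Proof.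
rewrite /ncoef /nceval big_mkcond /=; apply: eq_bigr => t _.
by case: eqP => _; rewrite ?mulr1 ?mulr0.
Qed.

Lemma nceval_coef G p (W : seq (seq X)) : uniq W -> (forall t, t \in p -> t.2 \in W) ->
  nceval G p = \sum_(v <- W) ncoef p v * G v.
Proof.
move=> uW hW.
under [RHS]eq_bigr => v _ do rewrite ncoef_eval /nceval mulr_suml.
rewrite exchange_big /nceval; apply: eq_big_seq => t tp.
rewrite (bigD1_seq t.2) ?hW //= eqxx mulr1 big1 ?addr0 // => v /negbTE nv.
by rewrite eq_sym nv mulr0 mul0r.
Qed.

Lemma nceval_equiv G p p' : ncequiv p p' -> nceval G p = nceval G p'.
Proof.
move=> e; set W := undup [seq t.2 | t <- p ++ p'].
have inW t : t \in p ++ p' -> t.2 \in W by move=> tp; rewrite mem_undup map_f.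
rewrite (@nceval_coef G p W) ?undup_uniq //; last by move=> t tp; rewrite inW // mem_cat tp.
rewrite (@nceval_coef G p' W) ?undup_uniq //; last by move=> t tp; rewrite inW // mem_cat tp orbT.
by apply: eq_bigr => v _; rewrite e.
Qed.

Lemma ncequiv_eval p p' : (forall G, nceval G p = nceval G p') -> ncequiv p p'.
Proof. by move=> h w; rewrite !ncoef_eval h. Qed.

Lemma nceval_add G p p' : nceval G (ncadd p p') = nceval G p + nceval G p'.
Proof. by rewrite /nceval big_cat. Qed.

Lemma nceval_scale G c p : nceval G (ncscale c p) = c * nceval G p.
Proof. by rewrite /nceval big_map mulr_sumr; apply: eq_bigr => t _; rewrite mulrA. Qed.

Lemma nceval_sub G p p' : nceval G (ncsub p p') = nceval G p - nceval G p'.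
Proof. by rewrite /ncsub nceval_add nceval_scale mulN1r. Qed.

Lemma nceval_sum G (ps : seq (ncpoly K X)) :
  nceval G (ncsum ps) = \sum_(p <- ps) nceval G p.
Proof. by rewrite /nceval /ncsum big_flatten. Qed.

Lemma nceval_mull G p p' :
  nceval G (ncmul p p') = nceval (fun v => nceval (fun u => G (v ++ u)) p') p.
Proof.
rewrite /nceval /ncmul big_allpairs_dep /=; apply: eq_bigr => a _.
by rewrite mulr_sumr; apply: eq_bigr => b _; rewrite mulrA.
Qed.

Lemma nceval_mulr G p p' :
  nceval G (ncmul p p') = nceval (fun u => nceval (fun v => G (v ++ u)) p) p'.
Proof.
rewrite nceval_mull /nceval; under eq_bigr => a _ do rewrite mulr_sumr.
rewrite exchange_big /=; apply: eq_bigr => b _; rewrite mulr_sumr.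
by apply: eq_bigr => a _; rewrite mulrCA mulrA.
Qed.

Definition ncone : ncpoly K X := [:: (1, [::])].

Lemma nceval_mul1l G p : nceval G (ncmul ncone p) = nceval G p.
Proof. by rewrite nceval_mull /nceval big_seq1 /= mul1r. Qed.

Lemma nceval_mul1r G p : nceval G (ncmul p ncone) = nceval G p.
Proof.
by rewrite nceval_mull; apply: eq_nceval => v; rewrite /nceval big_seq1 /= mul1r cats0.
Qed.

Lemma nceval_mulA G a b c :
  nceval G (ncmul (ncmul a b) c) = nceval G (ncmul a (ncmul b c)).
Proof.
rewrite !nceval_mull; apply: eq_nceval => v; rewrite nceval_mull.
by apply: eq_nceval => u; apply: eq_nceval => w; rewrite catA.
Qed.

Lemma nceval_mul_equiv G a a' b b' : ncequiv a a' -> ncequiv b b' ->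
  nceval G (ncmul a b) = nceval G (ncmul a' b').
Proof.
move=> ea eb; rewrite !nceval_mull (nceval_equiv _ ea); apply: eq_nceval => v.
exact: nceval_equiv.
Qed.

End Evaluation.

Arguments ncone {K X}.

Section Ideal.
Variables (K : fieldType) (X : eqType) (S : ncpoly K X -> Prop).
Local Notation inI := (inIdeal S).
Implicit Types p : ncpoly K X.

Lemma inIdeal_equiv p p' : ncequiv p p' -> inI p -> inI p'.
Proof. by move=> e [l [h e']]; exists l; split=> // w; rewrite -e e'. Qed.

Lemma inIdeal_eval p p' : (forall G, nceval G p = nceval G p') -> inI p -> inI p'.
Proof. by move/ncequiv_eval; apply: inIdeal_equiv. Qed.

Lemma inIdeal_gen s : S s -> inI s.
Proof.
move=> Ss; exists [:: (ncone, s, ncone)]; split; first by move=> t /[!inE] /eqP ->.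
by apply: ncequiv_eval => G; rewrite /ncsum /= cats0 nceval_mul1r nceval_mul1l.
Qed.

Lemma inIdeal0 : inI [::].
Proof. by exists [::]. Qed.

Lemma inIdealD p p' : inI p -> inI p' -> inI (ncadd p p').
Proof.
move=> [l [h e]] [l' [h' e']]; exists (l ++ l'); split.
  by move=> t /[!mem_cat] /orP[]; [apply: h | apply: h'].
apply: ncequiv_eval => G; rewrite nceval_add (nceval_equiv G e) (nceval_equiv G e').
by rewrite !nceval_sum map_cat big_cat.
Qed.

Lemma inIdealZ c p : inI p -> inI (ncscale c p).
Proof.
move=> [l [h e]]; exists [seq (ncscale c t.1.1, t.1.2, t.2) | t <- l]; split.
  by move=> t /mapP [u ul ->] /=; apply: h.
apply: ncequiv_eval => G; rewrite nceval_scale (nceval_equiv G e) !nceval_sum !big_map.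
by rewrite mulr_sumr; apply: eq_bigr => t _; rewrite !nceval_mull nceval_scale.
Qed.

Lemma inIdealB p p' : inI p -> inI p' -> inI (ncsub p p').
Proof. by move=> h h'; apply: inIdealD => //; apply: inIdealZ. Qed.

Lemma inIdealMl x p : inI p -> inI (ncmul x p).
Proof.
move=> [l [h e]]; exists [seq (ncmul x t.1.1, t.1.2, t.2) | t <- l]; split.
  by move=> t /mapP [u ul ->] /=; apply: h.
apply: ncequiv_eval => G; rewrite (@nceval_mul_equiv _ _ G x x p _ (fun w => erefl) e).
rewrite nceval_mulr !nceval_sum !big_map; apply: eq_bigr => t _ /=.
rewrite -nceval_mulr !nceval_mulA; apply: nceval_mul_equiv => //.
by apply: ncequiv_eval => G'; rewrite nceval_mulA.
Qed.

Lemma inIdealMr y p : inI p -> inI (ncmul p y).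
Proof.
move=> [l [h e]]; exists [seq (t.1.1, t.1.2, ncmul t.2 y) | t <- l]; split.
  by move=> t /mapP [u ul ->] /=; apply: h.
apply: ncequiv_eval => G; rewrite (@nceval_mul_equiv _ _ G p _ y y e (fun w => erefl)).
rewrite nceval_mull !nceval_sum !big_map; apply: eq_bigr => t _ /=.
by rewrite -nceval_mull nceval_mulA.
Qed.

Lemma inIdeal_sum (ps : seq (ncpoly K X)) : (forall p, p \in ps -> inI p) -> inI (ncsum ps).
Proof.
elim: ps => [|p ps IH] h; first exact: inIdeal0.
apply: (inIdealD (h p (mem_head _ _))) (IH _) => r rp.
by apply: h; rewrite inE rp orbT.
Qed.

End Ideal.

Lemma sub_inIdeal (K : fieldType) (X : eqType) (S S' : ncpoly K X -> Prop) p :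
  (forall s, S s -> inIdeal S' s) -> inIdeal S p -> inIdeal S' p.
Proof.
move=> hS [l [h e]].
apply: (inIdeal_equiv (p := ncsum [seq ncmul (ncmul t.1.1 t.1.2) t.2 | t <- l])).
  by move=> w; rewrite e.
apply: inIdeal_sum => r /mapP [t tl ->].
by apply/inIdealMr/inIdealMl/hS/h.
Qed.

Section Young.
Variables (K : fieldType) (q : K) (n d : nat).
Hypothesis q_not_root1 : forall k, (0 < k)%N -> q ^+ k != 1.
Local Notation F := (fgen K d).
Local Notation inI1 := (inIdeal (@rels_one K q n d)).
Implicit Types (s I J : seq 'I_n) (L M : {set 'I_n}).

Lemma mqinvD a b : mqinv q (a + b) = mqinv q a * mqinv q b.
Proof. by rewrite /mqinv exprD invfM. Qed.

(* The alternating relations rewrite f_s as [alt_coef s] times f_(sort s). *)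
Definition alt_coef s : K := if uniq s then mqinv q (ninv s) else 0.
Definition falt s : ncpoly K (gens n d) := ncscale (alt_coef s) (F (sort ord_le s)).

Lemma fgen_size_neq s : size s != d -> F s = [::].
Proof. by move=> hs; rewrite /fgen insubN. Qed.

Lemma fgenB_falt_in_ideal s : inI1 (ncsub (F s) (falt s)).
Proof.
have [hs|hs] := eqVneq (size s) d; last first.
  by rewrite /falt !fgen_size_neq ?size_sort //; exact: inIdeal0.
have ht : inI1 (arel q (Tuple (introT eqP hs))) by apply: inIdeal_gen; left; eexists.
move: ht; rewrite /arel /falt /alt_coef /=; case: (uniq s) => //.
by apply: inIdeal_eval => G; rewrite nceval_sub nceval_scale mul0r subr0.
Qed.

Definition yweight I L : K := mqinv q (ninv (outside L I ++ inside L I)).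

(* [yrel] with the second factor of each term sorted by the alternating relations *)
Definition yrel_sorted r I J : ncpoly K (gens n d) :=
  ncsum [seq ncscale (yweight I L) (ncmul (F (outside L I)) (falt (inside L I ++ J)))
        | L <- enum (ksubset [set y in I] r)].

Lemma nceval_yrel G r I J : size I = (d + r)%N -> uniq I ->
  nceval G (yrel q d r I J) = \sum_(L | ksubset [set y in I] r L)
     yweight I L * nceval G (ncmul (F (outside L I)) (F (inside L I ++ J))).
Proof.
move=> hI uI; pose tI : (d + r).-tuple 'I_n := Tuple (introT eqP hI).
rewrite /yrel nceval_sum !big_map big_enum_cond /=.
under eq_bigr => m _ do rewrite nceval_scale.
rewrite -[I]/(val tI) -(@big_mask_ksubset _ _ _ tI r (fun u v =>
  mqinv q (ninv (u ++ v)) * nceval G (ncmul (F u) (F (v ++ J)))) uI).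
by apply: eq_bigl => m; rewrite andbT.
Qed.

Lemma nceval_yrel_sorted G r I J :
  nceval G (yrel_sorted r I J) = \sum_(L | ksubset [set y in I] r L) yweight I L *
     (alt_coef (inside L I ++ J) *
      nceval G (ncmul (F (outside L I)) (F (sort ord_le (inside L I ++ J))))).
Proof.
rewrite nceval_sum big_map big_enum; apply: eq_bigr => L _.
by rewrite nceval_scale nceval_mulr nceval_scale -nceval_mulr.
Qed.

Lemma yrelB_sorted_in_ideal r I J : size I = (d + r)%N -> uniq I ->
  inI1 (ncsub (yrel q d r I J) (yrel_sorted r I J)).
Proof.
move=> hI uI.
apply: (inIdeal_eval (p := ncsum [seq ncscale (yweight I L)
   (ncmul (F (outside L I)) (ncsub (F (inside L I ++ J)) (falt (inside L I ++ J))))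
   | L <- enum (ksubset [set y in I] r)])); last first.
  apply: inIdeal_sum => _ /mapP [L _ ->].
  exact/inIdealZ/inIdealMl/fgenB_falt_in_ideal.
move=> G; rewrite nceval_sub nceval_yrel // nceval_sum big_map big_enum /=.
rewrite /yrel_sorted nceval_sum big_map big_enum -sumrB; apply: eq_bigr => L _.
by rewrite !nceval_scale -mulrBr !nceval_mulr nceval_sub.
Qed.

Lemma yrel_sorted1_in_ideal I J : (0 < d)%N -> size I = (d + 1)%N -> sorted ord_lt I ->
  size J = (d - 1)%N -> inI1 (yrel_sorted 1 I J).
Proof.
move=> d0 hI sI hJ.
have [uJ|nuJ] := boolP (uniq J).
  have hY : inI1 (yrel q d 1 I J).
    by apply: inIdeal_gen; right; exists I, J; split.
  apply: (inIdeal_eval (p := ncsub (yrel q d 1 I J) (ncsub (yrel q d 1 I J) (yrel_sorted 1 I J)))).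
    by move=> G; rewrite !nceval_sub opprB addrC subrK.
  exact/(inIdealB hY)/yrelB_sorted_in_ideal/sorted_ord_lt_uniq.
apply: (inIdeal_eval (p := [::])); last exact: inIdeal0.
move=> G; rewrite nceval_yrel_sorted /nceval big_nil big1 // => L _.
by rewrite /alt_coef cat_uniq (negPf nuJ) !andbF mul0r mulr0.
Qed.

Definition qsum r : K := \sum_(k < r) mqinv q (k + k).

Lemma qsum_neq0 r : (0 < r)%N -> qsum r != 0.
Proof.
move=> r0; pose y := (q ^+ 2)^-1.
have -> : qsum r = \sum_(k < r) y ^+ k.
  by apply: eq_bigr => k _; rewrite /mqinv addnn -mul2n exprM sqrrN -exprVn.
apply/eqP => h.
have /eqP : y ^+ r - 1 = 0 by rewrite subrX1 h mulr0.
rewrite subr_eq0 /y exprVn -exprM => /eqP h1.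
have : q ^+ (2 * r) = 1 by rewrite -[q ^+ _]invrK h1 invr1.
by apply/eqP/q_not_root1; rewrite muln_gt0.
Qed.

(* The term of L reached from M = L \ x through (Y_(I\M),(M|J))_(1) carries the
   coefficient of the L-term of (Y_I,J)_(r) times (-q)^(-2k), k the rank of x in L. *)
Lemma yweight_move_to_right I J L x : sorted ord_lt I -> L \subset [set y in I] -> x \in L ->
  let k := count (fun y : 'I_n => (y < x)%N) (inside L I) in
  yweight I (L :\ x) * mqinv q (ninv (outside L I ++ [:: x]))
    * alt_coef (x :: inside (L :\ x) I ++ J) =
  mqinv q (k + k) * yweight I L * alt_coef (inside L I ++ J).
Proof.
move=> sI sub xL /=.
have xI : x \in I by have := subsetP sub x xL; rewrite inE.
have pW : perm_eq (inside L I ++ J) (x :: inside (L :\ x) I ++ J).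
  by rewrite -cat_cons perm_cat2r (perm_inside_setD1 (sorted_ord_lt_uniq sI) xL xI).
rewrite /alt_coef -(perm_uniq pW); case: (uniq _); last by rewrite !mulr0.
rewrite /yweight -!mqinvD; congr (mqinv q _).
by have := ninv_move_to_right J sI xL xI; rewrite /=; lia.
Qed.

Lemma big_rank_weight I L : sorted ord_lt I -> L \subset [set y in I] ->
  \sum_(x in L) mqinv q (count (fun y : 'I_n => (y < x)%N) (inside L I)
                         + count (fun y : 'I_n => (y < x)%N) (inside L I)) = qsum #|L|.
Proof.
move=> sI sub; have uI := sorted_ord_lt_uniq sI.
have pL : perm_eq (enum L) (inside L I).
  apply: uniq_perm; [exact: enum_uniq | exact: filter_uniq |] => y.
  by rewrite mem_enum mem_filter andb_idr // => /(subsetP sub); rewrite inE.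
rewrite -big_enum /= (perm_big _ pL) /=.
rewrite (big_rank_sorted (fun k => mqinv q (k + k))); last exact: (sorted_inside _ ord_lt_trans sI).
by rewrite size_inside.
Qed.

Lemma yrel_sorted_reduction G r I J : sorted ord_lt I -> (0 < r)%N ->
  qsum r * nceval G (yrel_sorted r I J) = \sum_(M | ksubset [set y in I] r.-1 M)
     yweight I M * nceval G (yrel_sorted 1 (outside M I) (inside M I ++ J)).
Proof.
move=> sI r0; have uI := sorted_ord_lt_uniq sI.
pose b A B := nceval G (ncmul (F A) (F B)).
under [RHS]eq_bigr => M _.
  rewrite nceval_yrel_sorted big_ksubset1 mulr_sumr.
  under eq_bigl => x do rewrite inE mem_outside.
  over.
rewrite /= big_ksubset_setD1 // nceval_yrel_sorted mulr_sumr; apply: eq_bigr => L /andP [sub /eqP cL].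
have xI x : x \in L -> x \in I by move/(subsetP sub); rewrite inE.
transitivity (\sum_(x in L) mqinv q (count (fun y : 'I_n => (y < x)%N) (inside L I)
                 + count (fun y : 'I_n => (y < x)%N) (inside L I)) *
              (yweight I L * (alt_coef (inside L I ++ J) *
               b (outside L I) (sort ord_le (inside L I ++ J))))).
  by rewrite -mulr_suml big_rank_weight // cL.
apply: eq_bigr => x xL.
have xIM : x \in outside (L :\ x) I by rewrite mem_outside inE xI // !inE eqxx.
rewrite [yweight (outside _ I) _]/yweight outside_set1_setD1 // inside_set1 ?filter_uniq //=.
have -> : sort ord_le (x :: inside (L :\ x) I ++ J) = sort ord_le (inside L I ++ J).
  apply/esym/perm_sortP; [exact: ord_le_total | exact: ord_le_trans | exact: ord_le_anti |].
  by rewrite -cat_cons perm_cat2r (perm_inside_setD1 uI xL (xI x xL)).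
by rewrite !mulrA (yweight_move_to_right J sI sub xL).
Qed.

Lemma yrel_in_ideal r I J : yrel_ok d r I J -> inI1 (yrel q d r I J).
Proof.
case=> /andP [r0 rd] hI sI hJ uJ; have uI := sorted_ord_lt_uniq sI.
pose E := ncsum [seq ncscale (yweight I M) (yrel_sorted 1 (outside M I) (inside M I ++ J))
                | M <- enum (ksubset [set y in I] r.-1)].
have hE : inI1 E.
  apply: inIdeal_sum => p /mapP [M]; rewrite mem_enum => /andP [sub /eqP cM] ->.
  apply/inIdealZ/yrel_sorted1_in_ideal; first exact: leq_trans rd.
  - by rewrite size_outside // hI cM; case: (r) r0 => // r' _; lia.
  - exact: (sorted_outside _ ord_lt_trans sI).
  - by rewrite size_cat size_inside // cM hJ; case: (r) r0 rd => // r' _; lia.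
have hsorted : inI1 (yrel_sorted r I J).
  apply: (inIdeal_eval (p := ncscale (qsum r)^-1 E)); last exact: inIdealZ.
  move=> G; rewrite nceval_scale nceval_sum big_map big_enum /=.
  under eq_bigr => M _ do rewrite nceval_scale.
  by rewrite -yrel_sorted_reduction // mulKf ?qsum_neq0.
apply: (inIdeal_eval (p := ncadd (ncsub (yrel q d r I J) (yrel_sorted r I J)) (yrel_sorted r I J))).
  by move=> G; rewrite nceval_add nceval_sub subrK.
exact: inIdealD (yrelB_sorted_in_ideal _ hI uI) hsorted.
Qed.

End Young.

Theorem mainTheorem2 (K : fieldType) (q : K) (n d : nat)
  (hchar : [pchar K] =i pred0) (hdn : (d < n)%N)
  (hq0 : q != 0) (hq : forall k : nat, (0 < k)%N -> q ^+ k != 1) :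
  forall p : ncpoly K (gens n d),
    inIdeal (@rels_all K q n d) p <-> inIdeal (@rels_one K q n d) p.
Proof.
move=> p; split; apply: sub_inIdeal => s.
  case=> [[I ->]|[r [I [J [ok ->]]]]]; first by apply: inIdeal_gen; left; exists I.
  exact: yrel_in_ideal.
case=> [[I ->]|[I [J [ok ->]]]]; apply: inIdeal_gen; first by left; exists I.
by right; exists 1%N, I, J.
Qed.
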